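(* Every linear SEM-UR satisfying bottleneck faithfulness also satisfies SEM-UR faithfulness (parts (a), (b1), (b2)). The converse fails: there is a linear SEM-UR satisfying SEM-UR faithfulness but violating bottleneck faithfulness (e.g. three latent $H_1,H_2,H_3$, four observed $X_1,\dots,X_4$, $\mathbf A=\mathbf 0$ and $\mathbf B=\begin{bmatrix}0&1&-1\\2&2&0\\3&3&0\\4&0&4\end{bmatrix}$).
   Context: Linear SEM-UR: observed $X_1,\dots,X_q$, latent $H_1,\dots,H_l$, $H=N_H$, $X=\mathbf BH+\mathbf AX+N_X$, $\mathbf A$ strictly lower triangular, independent noises; the causal diagram is the DAG with edge $H_i\to X_j$ of weight $b_{ji}$ iff $b_{ji}\ne0$ and $X_k\to X_j$ of weight $a_{jk}$ iff $a_{jk}\ne0$. Mixing matrix $\mathbf W^{UR}=[(\mathbf I-\mathbf A)^{-1}\mathbf B\;\;(\mathbf I-\mathbf A)^{-1}]$; its $(X_j,N_V)$ entry is the total causal effect of $V$ on $X_j$ (sum over directed paths of products of weights; $1$ if $V=X_j$). Bottleneck faithfulness: for sets $\mathcal J\subseteq\mathcal H\cup\mathcal X$ and $\mathcal K\subseteq\mathcal X$, a bottleneck from $\mathcal J$ to $\mathcal K$ is a set of variables meeting every directed path from an element of $\mathcal J$ to an element of $\mathcal K$, and a minimal bottleneck is one of smallest size. The model satisfies bottleneck faithfulness if for all such $\mathcal J,\mathcal K$ the rank of the submatrix $\mathbf W^{\mathcal J}_{\mathcal K}$ of total causal effects from the variables of $\mathcal J$ to those of $\mathcal K$ equals the size of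 a minimal bottleneck from $\mathcal J$ to $\mathcal K$. $Pa,Ch,De$: parents, children, descendants ($De(V)$ excludes $V$). $\mathrm{TC}(V,\mathcal V)$: vector of total causal effects of $V$ on the elements of $\mathcal V$. Possible children of $V_i$: $De(V_i)$ together with all latent $H\neq V_i$ with $Ch(H)\subseteq De(V_i)$. SEM-UR faithfulness: (a) the total causal effect of any observed or latent variable on any of its descendants is nonzero; (b1) for each $V_i$, $\mathrm{TC}(V_i,De(V_i))$ is not in the span of any $k\le|Ch(V_i)|$ vectors of $\{\mathrm{TC}(V,De(V_i)):V$ a possible child of $V_i\}$, except when $k=|Ch(V_i)|$ and every latent $H_l$ among them has $Ch(H_l)\subseteq Ch(V_i)$; (b2) if $V_i$ is latent then for each child $X_j$, $\mathrm{TC}(V_i,De(V_i)\setminus\{X_j\})$ is not in the span of any $k\le|Ch(X_j)\cup Ch(V_i)|-1$ vectors of $\{\mathrm{TC}(V,De(V_i)\setminus\{X_j\}):V$ a possible child of $X_j\}$, except when $k=|Ch(X_j)\cup Ch(V_i)|-1$ and every latent $H_l$ among them has $Ch(H_l)\subseteq Ch(X_j)\cup Ch(V_i)$. *)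

From HB Require Import structures.
From mathcomp Require Import all_boot all_order all_algebra.
From mathcomp Require Import reals.
Set Implicit Arguments. Unset Strict Implicit. Unset Printing Implicit Defensive.
Import Order.TTheory GRing.Theory Num.Theory.
Local Open Scope ring_scope.

Section SEMUR.
Variables (R : realType) (q l : nat).
Variables (A : 'M[R]_q) (B : 'M[R]_(q, l)).

(* Variables of the model: latent H_i = inl i, observed X_j = inr j. *)
Definition var := ('I_l + 'I_q)%type.

Definition is_latent (v : var) : bool := if v is inl _ then true else false.

Definition strictly_lower : Prop := forall j k : 'I_q, (j <= k)%N -> A j k = 0.

Definition edge : rel var := fun v w =>
  match v, w with
  | inl i, inr j => B j i != 0
  | inr k, inr j => A j k != 0
  | _, _ => false
  end.

(* Mixing matrix W^UR = [(I-A)^{-1} B  (I-A)^{-1}] ; entry (X_j, N_v). *)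
Definition IAinv : 'M[R]_q := invmx (1%:M - A).
Definition WUR : 'M[R]_(q, l + q) := row_mx (IAinv *m B) IAinv.
Definition var_col (v : var) : 'I_(l + q) :=
  match v with inl i => lshift q i | inr k => rshift l k end.
Definition TCE (v : var) (j : 'I_q) : R := WUR j (var_col v).

Definition Ch (v : var) : {set var} := [set w | edge v w].
Definition De (v : var) : {set var} := [set w | (w != v) && connect edge v w].
Definition De_obs (v : var) : {set 'I_q} := [set j | inr j \in De v].
Definition possible_children (v : var) : {set var} :=
  De v :|: [set h | is_latent h && (h != v) && (Ch h \subset De v)].

Definition in_span_TC (S : {set 'I_q}) (u : var) (T : {set var}) : Prop :=
  exists c : var -> R, forall j, j \in S -> TCE u j = \sum_(v in T) c v * TCE v j.

Definition faithful_a : Prop :=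
  forall (v : var) (j : 'I_q), inr j \in De v -> TCE v j != 0.

Definition faithful_b1 : Prop :=
  forall (v : var) (T : {set var}),
    T \subset possible_children v ->
    (#|T| <= #|Ch v|)%N ->
    ~ (#|T| = #|Ch v| /\ forall h, h \in T -> is_latent h -> Ch h \subset Ch v) ->
    ~ in_span_TC (De_obs v) v T.

Definition faithful_b2 : Prop :=
  forall (v : var) (j : 'I_q), is_latent v -> inr j \in Ch v ->
  forall T : {set var},
    T \subset possible_children (inr j) ->
    (#|T| <= #|Ch (inr j) :|: Ch v| - 1)%N ->
    ~ (#|T| = (#|Ch (inr j) :|: Ch v| - 1)%N /\
       forall h, h \in T -> is_latent h -> Ch h \subset Ch (inr j) :|: Ch v) ->
    ~ in_span_TC (De_obs v :\ j) v T.

Definition semur_faithful : Prop := [/\ faithful_a, faithful_b1 & faithful_b2].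

Definition is_bottleneck (J : {set var}) (K : {set 'I_q}) (S : {set var}) : Prop :=
  forall (x : var) (p : seq var), path edge x p -> x \in J ->
    (if last x p is inr k then k \in K else false) ->
    has (mem S) (x :: p).

Definition min_bottleneck_size (J : {set var}) (K : {set 'I_q}) (n : nat) : Prop :=
  (exists S, is_bottleneck J K S /\ #|S| = n) /\
  (forall S, is_bottleneck J K S -> (n <= #|S|)%N).

Definition Wsub (J : {set var}) (K : {set 'I_q}) : 'M[R]_(#|K|, #|J|) :=
  \matrix_(a < #|K|, b < #|J|) TCE (enum_val b) (enum_val a).

Definition bottleneck_faithful : Prop :=
  forall (J : {set var}) (K : {set 'I_q}), min_bottleneck_size J K (\rank (Wsub J K)).

End SEMUR.

Definition exB_rows : seq (seq int) :=
  [:: [:: 0; 1; -1]; [:: 2; 2; 0]; [:: 3; 3; 0]; [:: 4; 0; 4]]%Z.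
Definition exA (R : realType) : 'M[R]_4 := 0.
Definition exB (R : realType) : 'M[R]_(4, 3) :=
  \matrix_(i < 4, j < 3) ((nth 0%Z (nth [::] exB_rows i) j)%:~R).

From HB Require Import structures.
From mathcomp Require Import all_boot all_order all_algebra.
From mathcomp Require Import reals zify.
Set Implicit Arguments. Unset Strict Implicit. Unset Printing Implicit Defensive.
Import Order.TTheory GRing.Theory Num.Theory.
Local Open Scope ring_scope.

(* If TC(v, K) lies in the span of the effects of a set T
   with v outside T, then the effect matrix of v |: T on K has no larger rank
   than that of T; by bottleneck faithfulness a minimal bottleneck S from
   v |: T to K is then no larger than any bottleneck from T to K, T itself
   included.  Such an S cannot contain a vertex unreachable from T (it could
   be dropped), so in the situations of (b1)/(b2) it avoids v (and X_j) and
   therefore contains the children it is forced to block; comparing sizes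
   pins S down and puts T in the excepted case.  Part (a) is the rank-0 case.
   Acyclicity of the diagram (A strictly lower triangular) supplies the needed
   unreachability facts.

   For the explicit 4x3 example (A = 0) descendants are children,
   possible children of a latent are its children and observed variables have
   none, which makes (a), (b1), (b2) direct checks; bottleneck faithfulness
   fails for J = {H_1, H_2}, K = {X_2, X_3}. *)

Section CausalDiagram.
Variables (R : realType) (q l : nat) (A : 'M[R]_q) (B : 'M[R]_(q, l)).

Lemma edge_to_latent (v : var q l) (i : 'I_l) : edge A B v (inl i) = false.
Proof. by case: v. Qed.

Lemma edge_target (v w : var q l) : edge A B v w -> exists k, w = inr k.
Proof. by case: w => [i|k]; [rewrite edge_to_latent | exists k]. Qed.

Lemma connect_to_latent (x : var q l) (i : 'I_l) :
  connect (edge A B) x (inl i) -> x = inl i.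
Proof.
case/connectP => p; case/lastP: p => [_ -> //|p y].
by rewrite rcons_path last_rcons => /andP[_ /edge_target [k ->]].
Qed.

Lemma latent_notin_De (v : var q l) (i : 'I_l) : inl i \notin De A B v.
Proof.
by rewrite inE; apply/negP => /andP[iv /connect_to_latent vi]; rewrite vi eqxx in iv.
Qed.

Lemma latent_unreachable (T : {set var q l}) (i : 'I_l) (x y : var q l) :
  inl i \notin T -> x \in T -> connect (edge A B) x y -> y != inl i.
Proof.
move=> iT xT; apply: contraTneq => ->.
by apply/negP => /connect_to_latent xi; rewrite -xi xT in iT.
Qed.

Lemma latent_possible_child (v : var q l) (i : 'I_l) :
  inl i \in possible_children A B v -> Ch A B (inl i) \subset De A B v.
Proof.
by case/setUP => [|]; [rewrite (negbTE (latent_notin_De _ _)) | rewrite inE => /andP[]].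
Qed.

Lemma not_own_possible_child (v : var q l) : v \notin possible_children A B v.
Proof. by rewrite !inE eqxx /= andbF. Qed.

(* Acyclicity: when A is strictly lower triangular, edges strictly increase
   the rank below, which puts latent variables first and X_j at position j+1. *)
Section Acyclic.
Hypothesis slA : strictly_lower A.

Definition var_rank (v : var q l) : nat := if v is inr j then j.+1 else 0.

Lemma edge_rank (v w : var q l) : edge A B v w -> (var_rank v < var_rank w)%N.
Proof.
case: v w => [i|k] [i'|j] //= ajk; rewrite ltnS ltnNge; apply/negP => jk.
by move: ajk; rewrite slA ?eqxx.
Qed.

Lemma connect_rank (v w : var q l) :
  connect (edge A B) v w -> v = w \/ (var_rank v < var_rank w)%N.
Proof.
case/connectP => p + ->; elim: p v => [|y p IH] v /=; first by left.
case/andP => /edge_rank vy /IH [<-|yp]; right => //; exact: ltn_trans yp.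
Qed.

Lemma connect_rank_le (v w : var q l) :
  connect (edge A B) v w -> (var_rank v <= var_rank w)%N.
Proof. by case/connect_rank => [->|/ltnW]. Qed.

Lemma De_rank (v w : var q l) : w \in De A B v -> (var_rank v < var_rank w)%N.
Proof. by rewrite inE => /andP[/eqP wv /connect_rank [vw|//]]; case: wv. Qed.

Lemma Ch_sub_De (v w : var q l) : w \in Ch A B v -> w \in De A B v.
Proof.
rewrite !inE => evw; rewrite connect1 // andbT.
by apply: contraTneq (edge_rank evw) => ->; rewrite ltnn.
Qed.

Lemma possible_child_unreachable (v t y : var q l) :
  t \in possible_children A B v -> connect (edge A B) t y -> y != v.
Proof.
move=> tP cty; apply/eqP => yv; subst y.
case/setUP: tP => [/De_rank|]; first by have := connect_rank_le cty; lia.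
rewrite !inE => /andP[/andP[_ tv] Cht].
case/connectP: cty => [[|z p]] /=; first by move=> _ vt; rewrite vt eqxx in tv.
case/andP => etz pzv vlast.
have zD : z \in De A B v by apply: (subsetP Cht); rewrite inE.
have czv : connect (edge A B) z v by apply/connectP; exists p.
by have := De_rank zD; have := connect_rank_le czv; lia.
Qed.

Lemma parent_not_possible_child (v w : var q l) :
  w \in Ch A B v -> v \notin possible_children A B w.
Proof.
move=> wC; apply/negP => vP.
have evw : edge A B v w by rewrite inE in wC.
by have := possible_child_unreachable vP (connect1 evw); rewrite eqxx.
Qed.

End Acyclic.
End CausalDiagram.

Section Bottlenecks.
Variables (R : realType) (q l : nat) (A : 'M[R]_q) (B : 'M[R]_(q, l)).
Implicit Types (J S : {set var q l}) (K : {set 'I_q}).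

Lemma bottleneck_self J K : is_bottleneck A B J K J.
Proof. by move=> x p _ xJ _ /=; rewrite xJ. Qed.

Lemma bottleneck_subset J0 J K S :
  J0 \subset J -> is_bottleneck A B J K S -> is_bottleneck A B J0 K S.
Proof. by move=> sJ0J HS x p pth /(subsetP sJ0J); apply: HS. Qed.

Lemma bottleneck_remove J K S w :
  (forall x y : var q l, x \in J -> connect (edge A B) x y -> y != w) ->
  is_bottleneck A B J K S -> is_bottleneck A B J K (S :\ w).
Proof.
move=> unreach HS x p pth xJ lastK; case/hasP: (HS x p pth xJ lastK) => y yp yS.
apply/hasP; exists y => //; rewrite !inE -[y \in S]/(mem S y) yS andbT.
exact: unreach xJ (path_connect pth yp).
Qed.

Lemma bottleneck_hit J K S x p k :
  is_bottleneck A B J K S -> x \in J -> path (edge A B) x (rcons p (inr k)) ->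
  k \in K -> ~~ has (mem S) (x :: p) -> inr k \in S.
Proof.
move=> HS xJ pth kK avoid; have := HS x _ pth xJ; rewrite last_rcons kK.
by rewrite -rcons_cons has_rcons (negbTE avoid) orbF => /(_ isT).
Qed.

Lemma bottleneck_hit_edge J K S x k :
  is_bottleneck A B J K S -> x \in J -> x \notin S -> edge A B x (inr k) ->
  k \in K -> inr k \in S.
Proof.
move=> HS xJ xS exk kK.
by apply: (bottleneck_hit (p := [::]) HS xJ) => //=; rewrite ?exk ?orbF.
Qed.

End Bottlenecks.

Lemma rank_Wsub_span (R : realType) (q l : nat) (A : 'M[R]_q) (B : 'M[R]_(q, l))
    (J : {set var q l}) (K : {set 'I_q}) (v : var q l) :
  v \notin J -> in_span_TC A B K v J ->
  (\rank (Wsub A B (v |: J) K) <= \rank (Wsub A B J K))%N.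
Proof.
move=> vJ [c Hc].
pose M := \matrix_(b' < #|J|, b < #|v |: J|)
  (if enum_val b == v then c (enum_val b')
   else ((enum_val b' == enum_val b)%:R : R)).
suff -> : Wsub A B (v |: J) K = Wsub A B J K *m M by exact: mxrankM_maxl.
apply/matrixP => a b; rewrite !mxE.
under eq_bigr do rewrite !mxE.
rewrite -(big_enum_val (A := mem J) (fun t => TCE A B t (enum_val a) *
   (if enum_val b == v then c t else ((t == enum_val b)%:R : R)))).
case: eqP => [->|ne].
  by rewrite Hc ?enum_valP //; apply: eq_bigr => t _; rewrite mulrC.
have bJ : enum_val b \in J by have := enum_valP b; rewrite in_setU1 => /orP[/eqP|].
rewrite (bigD1 (enum_val b)) //= eqxx mulr1 big1 ?addr0 // => t /andP[_ /negbTE ->].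
by rewrite mulr0.
Qed.

Section BottleneckFaithfulness.
Variables (R : realType) (q l : nat) (A : 'M[R]_q) (B : 'M[R]_(q, l)).
Hypotheses (slA : strictly_lower A) (bf : bottleneck_faithful A B).

Lemma span_min_bottleneck (T : {set var q l}) (K : {set 'I_q}) (v : var q l) :
  v \notin T -> in_span_TC A B K v T ->
  exists S, is_bottleneck A B (v |: T) K S /\
    forall S', is_bottleneck A B T K S' -> (#|S| <= #|S'|)%N.
Proof.
move=> vT span; have [[S [HS eS]] _] := bf (v |: T) K; have [_ minT] := bf T K.
exists S; split => // S' HS'; rewrite eS.
exact: leq_trans (rank_Wsub_span vT span) (minT S' HS').
Qed.

Lemma min_bottleneck_unreachable (T : {set var q l}) (K : {set 'I_q})
    (v : var q l) (S : {set var q l}) (w : var q l) :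
  is_bottleneck A B (v |: T) K S ->
  (forall S', is_bottleneck A B T K S' -> (#|S| <= #|S'|)%N) ->
  (forall x y : var q l, x \in T -> connect (edge A B) x y -> y != w) -> w \notin S.
Proof.
move=> HS Smin unreach; apply/negP => wS.
have := Smin _ (bottleneck_remove unreach (bottleneck_subset (subsetUr _ _) HS)).
by rewrite (cardsD1 w S) wS add1n ltnn.
Qed.

Lemma min_bottleneck_tight (T : {set var q l}) (K : {set 'I_q}) (S U : {set var q l}) :
  (forall S', is_bottleneck A B T K S' -> (#|S| <= #|S'|)%N) ->
  U \subset S -> (#|T| <= #|U|)%N -> S = U /\ #|T| = #|U|.
Proof.
move=> Smin US TU; have ST := Smin _ (bottleneck_self (J := T) (K := K)).
have UScard := subset_leq_card US.
have SU : #|S| = #|U| by apply/eqP; rewrite eqn_leq UScard (leq_trans ST TU).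
split; first by apply/eqP; rewrite eq_sym eqEcard US SU leqnn.
by apply/eqP; rewrite eqn_leq TU -SU ST.
Qed.

(* Part (a): a zero total effect on a descendant would give rank 0, while
   the empty set does not block the path realising the descent. *)
Lemma bottleneck_faithful_a : faithful_a A B.
Proof.
move=> v j jD; apply/negP => /eqP TC0.
have [[S [HS eS]] _] := bf [set v] [set j].
have W0 : Wsub A B [set v] [set j] = 0.
  apply/matrixP => a b; rewrite !mxE.
  by move: (enum_valP a) (enum_valP b); rewrite !inE => /eqP -> /eqP ->.
move: eS; rewrite W0 mxrank0 => /eqP; rewrite cards_eq0 => /eqP S0.
move: jD; rewrite inE => /andP[_ /connectP [p pth jlast]].
have := HS v p pth (set11 v); rewrite -jlast inE eqxx => /(_ isT).
by rewrite S0; case/hasP => y _; rewrite /= inE.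
Qed.

(* Part (b1): were TC(v, De v) spanned by the effects of a set T of at most
   |Ch v| possible children, a minimal bottleneck S from v |: T to De v would
   avoid v and contain Ch v; hence S = Ch v, |T| = |Ch v|, and every latent
   member of T has its children in S = Ch v: the excepted situation. *)
Lemma bottleneck_faithful_b1 : faithful_b1 A B.
Proof.
move=> v T TP TCh notexc span.
have vT : v \notin T := contra (subsetP TP v) (not_own_possible_child A B v).
have [S [HS Smin]] := span_min_bottleneck vT span.
have vS : v \notin S.
  apply: (min_bottleneck_unreachable HS Smin) => x y /(subsetP TP) xP.
  exact (possible_child_unreachable slA xP).
have ChS : Ch A B v \subset S.
  apply/subsetP => w wC; have evw : edge A B v w by rewrite inE in wC.
  have [k Ek] := edge_target evw; subst w.
  by apply: bottleneck_hit_edge HS (setU11 _ _) vS evw _; rewrite inE (Ch_sub_De slA).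
have [SE TCh_eq] := min_bottleneck_tight Smin ChS TCh.
apply: notexc; split => // -[i|//] iT _.
have iS : inl i \notin S by rewrite SE inE edge_to_latent.
have ChDe := latent_possible_child (subsetP TP _ iT).
apply/subsetP => w wC; have eiw : edge A B (inl i) w by rewrite inE in wC.
have [k Ek] := edge_target eiw; subst w; rewrite -SE.
apply: bottleneck_hit_edge HS _ iS eiw _; first by rewrite in_setU1 iT orbT.
by rewrite inE (subsetP ChDe).
Qed.

(* Part (b2), for a latent v = H_i with child X_j: the same argument with
   K = De v minus X_j, where a minimal bottleneck now avoids both H_i and X_j
   and therefore contains (Ch X_j :|: Ch H_i) minus X_j. *)
Lemma bottleneck_faithful_b2 : faithful_b2 A B.
Proof.
move=> [i|//] j _ jC T TP TU notexc span.
have eij : edge A B (inl i) (inr j) by rewrite inE in jC.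
have iT : inl i \notin T := contra (subsetP TP _) (parent_not_possible_child slA jC).
have [S [HS Smin]] := span_min_bottleneck iT span.
have inK k : k != j -> connect (edge A B) (inl i) (inr k) ->
    k \in De_obs A B (inl i) :\ j by move=> kj cik; rewrite !inE kj cik.
have iS : inl i \notin S.
  apply: (min_bottleneck_unreachable HS Smin) => x y.
  exact (latent_unreachable iT).
have jS : inr j \notin S.
  apply: (min_bottleneck_unreachable HS Smin) => x y /(subsetP TP) xP.
  exact (possible_child_unreachable slA xP).
pose U := (Ch A B (inr j) :|: Ch A B (inl i)) :\ inr j.
have US : U \subset S.
  apply/subsetP => w; rewrite !inE => /andP[wj /orP[ejw|eiw]].
    have [k Ek] := edge_target ejw; subst w; have kj : k != j := wj.
    have pth : path (edge A B) (inl i) (rcons [:: inr j] (inr k)).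
      by rewrite /= andbT; apply/andP.
    apply: (bottleneck_hit HS (setU11 _ _) pth); last by rewrite /= orbF; apply/norP.
    exact: inK k kj (connect_trans (connect1 eij) (connect1 ejw)).
  have [k Ek] := edge_target eiw; subst w; have kj : k != j := wj.
  exact: bottleneck_hit_edge HS (setU11 _ _) iS eiw (inK k kj (connect1 eiw)).
have cardU : #|U| = (#|Ch A B (inr j) :|: Ch A B (inl i)| - 1)%N.
  by rewrite (cardsD1 (inr j) (_ :|: _)) inE jC orbT add1n subn1.
have [SE TU_eq] := min_bottleneck_tight Smin US (leq_trans TU (eq_leq (esym cardU))).
apply: notexc; split; first by rewrite TU_eq cardU.
move=> [i'|//] i'T _; have i'S : inl i' \notin S by rewrite SE !inE edge_to_latent.
have ChDe := latent_possible_child (subsetP TP _ i'T).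
apply/subsetP => w wC; have ei'w : edge A B (inl i') w by rewrite inE in wC.
have [k Ek] := edge_target ei'w; subst w.
have := subsetP ChDe _ wC; rewrite inE => /andP[kj cjk].
have kK := inK k kj (connect_trans (connect1 eij) cjk).
have := bottleneck_hit_edge HS (_ : inl i' \in inl i |: T) i'S ei'w kK.
by rewrite SE in_setU1 i'T orbT => /(_ isT) /setD1P[].
Qed.

Lemma bottleneck_faithful_semur_faithful : semur_faithful A B.
Proof.
by split; [exact: bottleneck_faithful_a | exact: bottleneck_faithful_b1 |
           exact: bottleneck_faithful_b2].
Qed.

End BottleneckFaithfulness.

Section Counterexample.
Variable R : realType.
Local Notation A0 := (exA R).
Local Notation B0 := (exB R).

Lemma exA_strictly_lower : strictly_lower A0.
Proof. by move=> j k _; rewrite mxE. Qed.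

Definition exB_support (j : 'I_4) (i : 'I_3) : bool :=
  nth 0%Z (nth [::] exB_rows j) i != 0%Z.

Lemma ex_edge_latent (i : 'I_3) (j : 'I_4) :
  edge A0 B0 (inl i) (inr j) = exB_support j i.
Proof. by rewrite /= mxE intr_eq0. Qed.

Lemma ex_edge_observed (k : 'I_4) (w : var 4 3) : edge A0 B0 (inr k) w = false.
Proof. by case: w => // j; rewrite /= mxE eqxx. Qed.

Lemma ex_TC_latent (i : 'I_3) (j : 'I_4) : TCE A0 B0 (inl i) j = B0 j i.
Proof. by rewrite /TCE /WUR /IAinv subr0 invmx1 /= row_mxEl mul1mx. Qed.

Lemma ex_TC_observed (k j : 'I_4) : TCE A0 B0 (inr k) j = (j == k)%:R.
Proof. by rewrite /TCE /WUR /IAinv subr0 invmx1 /= row_mxEr mxE. Qed.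

Lemma ex_connect_observed (k : 'I_4) (y : var 4 3) :
  connect (edge A0 B0) (inr k) y -> y = inr k.
Proof. by case/connectP => [[_ ->//|z p]] /andP[]; rewrite ex_edge_observed. Qed.

Lemma ex_De_observed (k : 'I_4) : De A0 B0 (inr k) = set0.
Proof.
apply/setP => w; rewrite !inE; apply/negP => /andP[wk /ex_connect_observed wE].
by rewrite wE eqxx in wk.
Qed.

Lemma ex_Ch_observed (k : 'I_4) : Ch A0 B0 (inr k) = set0.
Proof. by apply/setP => w; rewrite !inE ex_edge_observed. Qed.

Lemma ex_De_latent (i : 'I_3) : De A0 B0 (inl i) = Ch A0 B0 (inl i).
Proof.
apply/setP => w; apply/idP/idP; last exact: (Ch_sub_De exA_strictly_lower).
rewrite inE => /andP[wi /connectP [[|z p]]]; first by move=> _ wE; rewrite wE eqxx in wi.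
case/andP => eiz pth wE; have [k Ek] := edge_target eiz; subst z.
suff -> : w = inr k by rewrite inE.
by apply: ex_connect_observed; apply/connectP; exists p.
Qed.

Lemma ex_latent_has_child (i : 'I_3) : exists j : 'I_4, exB_support j i.
Proof.
by case: i => [[|[|[|?]]] ?] //; [exists (@Ordinal 4 1 isT) | exists (@Ordinal 4 1 isT)
  | exists (@Ordinal 4 0 isT)].
Qed.

Lemma ex_children_separate (i i' : 'I_3) :
  i != i' -> exists j : 'I_4, exB_support j i' && ~~ exB_support j i.
Proof.
case: i i' => [[|[|[|?]]] ?] [[|[|[|?]]] ?] //= _;
  first [by exists (@Ordinal 4 0 isT) | by exists (@Ordinal 4 1 isT)
        | by exists (@Ordinal 4 3 isT)].
Qed.

Lemma ex_possible_children_latent (i : 'I_3) :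
  possible_children A0 B0 (inl i) = Ch A0 B0 (inl i).
Proof.
rewrite /possible_children ex_De_latent; apply/setUidPl/subsetP => -[i'|k];
  rewrite !inE //= => /andP[i'i /subsetP sub].
have ii' : i != i' by rewrite eq_sym.
have [j /andP[ei'j eij]] := ex_children_separate ii'.
have := sub (inr j); rewrite !inE !ex_edge_latent ei'j => /(_ isT).
by rewrite (negbTE eij).
Qed.

Lemma ex_possible_children_observed (k : 'I_4) :
  possible_children A0 B0 (inr k) = set0.
Proof.
rewrite /possible_children ex_De_observed set0U.
apply/setP => -[i|k']; rewrite !inE //=; apply/negP => /subsetP sub.
have [j eij] := ex_latent_has_child i.
by have := sub (inr j); rewrite !inE ex_edge_latent eij => /(_ isT).
Qed.

Lemma ex_faithful_a : faithful_a A0 B0.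
Proof.
move=> [i|k] j; last by rewrite ex_De_observed inE.
by rewrite ex_De_latent inE ex_TC_latent.
Qed.

Lemma ex_observed_span_zero (T : {set var 4 3}) (c : var 4 3 -> R) (k : 'I_4) :
  (forall t, t \in T -> ~~ is_latent t) -> inr k \notin T ->
  \sum_(t in T) c t * TCE A0 B0 t k = 0.
Proof.
move=> Tobs kT; apply: big1 => -[i|k'] tT; first by have := Tobs _ tT.
rewrite ex_TC_observed; case: eqP => [kk'|_]; last by rewrite mulr0.
by rewrite kk' tT in kT.
Qed.

(* (b1): the possible children of H_i are its children; a child X_k outside T
   carries the nonzero effect b_ki that no combination of T reproduces. *)
Lemma ex_faithful_b1 : faithful_b1 A0 B0.
Proof.
move=> [i|k] T TP TCh notexc [c span]; last first.
  move: TP; rewrite ex_possible_children_observed subset0 => /eqP T0.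
  by apply: notexc; rewrite T0 cards0 ex_Ch_observed cards0; split=> // h; rewrite inE.
rewrite ex_possible_children_latent in TP.
have Tobs t : t \in T -> ~~ is_latent t.
  by move/(subsetP TP); case: t => // i'; rewrite inE edge_to_latent.
have [ChT|/subsetPn [w wC wT]] := boolP (Ch A0 B0 (inl i) \subset T).
  apply: notexc; split=> [|h /Tobs /negbTE -> //].
  by apply/eqP; rewrite eqn_leq TCh subset_leq_card.
have eiw : edge A0 B0 (inl i) w by rewrite inE in wC.
have [k Ek] := edge_target eiw; subst w.
have /span : k \in De_obs A0 B0 (inl i) by rewrite inE ex_De_latent.
by rewrite ex_TC_latent ex_observed_span_zero //; apply/eqP.
Qed.

(* (b2): X_j has no possible children, so T is empty; then H_i must have a
   child X_k other than X_j, on which its effect b_ki is nonzero. *)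
Lemma ex_faithful_b2 : faithful_b2 A0 B0.
Proof.
move=> [i|//] j _ jC T TP TU notexc [c span].
move: TP; rewrite ex_possible_children_observed subset0 => /eqP T0; subst T.
have [C0|/set0Pn [w /setD1P[wj wC]]] := eqVneq (Ch A0 B0 (inl i) :\ inr j) set0.
  apply: notexc; rewrite ex_Ch_observed set0U cards0 (cardsD1 (inr j)) jC C0 cards0.
  by split=> // h; rewrite inE.
have eiw : edge A0 B0 (inl i) w by rewrite inE in wC.
have [k Ek] := edge_target eiw; subst w.
have /span : k \in De_obs A0 B0 (inl i) :\ j by rewrite in_setD1 inE ex_De_latent wC andbT.
by rewrite ex_TC_latent big_set0; apply/eqP.
Qed.

Lemma ex_semur_faithful : semur_faithful A0 B0.
Proof. by split; [exact: ex_faithful_a | exact: ex_faithful_b1 | exact: ex_faithful_b2].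
Qed.

(* Bottleneck faithfulness fails for J = {H_1, H_2} and K = {X_2, X_3}: the
   effect matrix [[2, 2], [3, 3]] has rank 1, but the disjoint paths
   H_1 -> X_2 and H_2 -> X_3 need two vertices to be blocked. *)
Lemma ex_not_bottleneck_faithful : ~ bottleneck_faithful A0 B0.
Proof.
pose i0 := @Ordinal 3 0 isT; pose i1 := @Ordinal 3 1 isT.
pose k1 := @Ordinal 4 1 isT; pose k2 := @Ordinal 4 2 isT.
pose J : {set var 4 3} := [set inl i0; inl i1].
pose K : {set 'I_4} := [set k1; k2].
move=> bf; have [[S [HS eS]] _] := bf J K.
have rank1 : (\rank (Wsub A0 B0 J K) <= 1)%N.
  have -> : Wsub A0 B0 J K = (\col_(a < #|K|) B0 (enum_val a) i0) *m const_mx (1 : R).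
    apply/matrixP => a b; rewrite !mxE big_ord1 !mxE mulr1.
    move: (enum_valP a) (enum_valP b); rewrite !inE.
    by case/orP => /eqP -> /orP[] /eqP ->; rewrite ex_TC_latent !mxE.
  exact: leq_trans (mxrankM_maxl _ _) (rank_leq_col _).
have hit0 : (inl i0 \in S) || (inr k1 \in S).
  case: (boolP (inl i0 \in S)) => //= i0S.
  by apply: bottleneck_hit_edge HS _ i0S _ _; rewrite ?ex_edge_latent ?inE ?eqxx.
have hit1 : (inl i1 \in S) || (inr k2 \in S).
  case: (boolP (inl i1 \in S)) => //= i1S.
  by apply: bottleneck_hit_edge HS _ i1S _ _; rewrite ?ex_edge_latent ?inE ?eqxx ?orbT.
have /card_le1_eqP S1 : (#|S| <= 1)%N by rewrite eS.
by case/orP: hit0 => x0; case/orP: hit1 => x1; have := S1 _ _ x0 x1.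
Qed.

End Counterexample.

Theorem mainTheorem14 (R : realType) :
  (forall (q l : nat) (A : 'M[R]_q) (B : 'M[R]_(q, l)),
      strictly_lower A -> bottleneck_faithful A B -> semur_faithful A B) /\
  [/\ strictly_lower (exA R), semur_faithful (exA R) (exB R)
    & ~ bottleneck_faithful (exA R) (exB R)].
Proof.
split=> [q l A B|]; first exact: bottleneck_faithful_semur_faithful.
split; [exact: exA_strictly_lower | exact: ex_semur_faithful |
        exact: ex_not_bottleneck_faithful].
Qed.
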